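(* Let $b\in L^m_{\mathrm{loc}}(\mathbb{R}^n)$, let $\mathcal{S}$ be a sparse family, $m$ a positive integer, $h\in\{0,\dots,m\}$, and $A$ a Young function. Then for every $x$, $$\mathcal{A}_{A,\mathcal{S}}^{m-h}(b,f)(x)\leq \sum_{Q\in \mathcal{S}} |b(x)-b_Q|^m \|f\|_{A,Q}\, \chi_Q(x) + \sum_{Q\in \mathcal{S}} \big\|f|b-b_Q|^m\big\|_{A,Q}\, \chi_Q(x),$$ where $\mathcal{A}_{A,\mathcal{S}}^{m-h}(b,f)(x)=\sum_{Q\in\mathcal{S}}|b(x)-b_Q|^{m-h}\,\big\|f|b-b_Q|^h\big\|_{A,Q}\chi_Q(x)$.
   Context: In $\mathbb{R}^n$; $b_Q=\frac1{|Q|}\int_Qb$; for a Young function $A$, $\|g\|_{A,Q}=\inf\{\lambda>0:\frac1{|Q|}\int_QA(|g|/\lambda)\le1\}$. A sparse family: cubes $Q$ with pairwise disjoint $E_Q\subset Q$, $|E_Q|\ge\eta|Q|$. *)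

From HB Require Import structures.
From mathcomp Require Import all_boot all_order all_algebra.
From mathcomp Require Import all_classical all_reals all_analysis.
Set Implicit Arguments. Unset Strict Implicit. Unset Printing Implicit Defensive.
Import Order.TTheory GRing.Theory Num.Theory.
Import numFieldNormedType.Exports.
Local Open Scope classical_set_scope.
Local Open Scope ring_scope.

Section defs.
Context {R : realType} {n : nat}.

Notation pt := (n.-tuple R).

Definition box (a b : pt) : set pt :=
  [set x | forall i : 'I_n, tnth a i <= tnth x i < tnth b i].

(* mu is Lebesgue measure on R^n: it gives each box its volume.
   (This determines mu uniquely on the Borel sigma-algebra of R^n.) *)
Definition lebesgue_on_boxes (mu : {measure set pt -> \bar R}) : Prop :=
  forall a b : pt, (forall i, tnth a i <= tnth b i) ->
    mu (box a b) = (\prod_(i < n) (tnth b i - tnth a i))%:E.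

Definition is_cube (Q : set pt) : Prop :=
  exists (a : pt) (l : R), 0 < l /\
    Q = [set x | forall i : 'I_n, tnth a i <= tnth x i < tnth a i + l].

Definition avg (mu : {measure set pt -> \bar R}) (Q : set pt) (b : pt -> R) : R :=
  (fine (mu Q))^-1 * fine (\int[mu]_(y in Q) (b y)%:E).

(* b in L^m_loc: measurable and |b|^m integrable on every cube
   (equivalently on every compact set) *)
Definition Lloc (mu : {measure set pt -> \bar R}) (m : nat) (b : pt -> R) : Prop :=
  measurable_fun setT b /\
  forall Q, is_cube Q -> (\int[mu]_(y in Q) (`|b y| ^+ m)%:E < +oo)%E.

Definition sparse (mu : {measure set pt -> \bar R}) (eta : R) (S : set (set pt)) : Prop :=
  0 < eta /\ (forall Q, S Q -> is_cube Q) /\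
  exists E : set pt -> set pt,
    (forall Q, S Q -> measurable (E Q) /\ E Q `<=` Q /\ ((eta%:E * mu Q) <= mu (E Q))%E) /\
    (forall Q Q', S Q -> S Q' -> Q <> Q' -> E Q `&` E Q' = set0).

End defs.

Definition young {R : realType} (A : R -> R) : Prop :=
  A 0 = 0 /\
  (forall t, 0 <= t -> 0 <= A t) /\
  {within `[0, +oo[, continuous A} /\
  (forall s t, 0 <= s -> s <= t -> A s <= A t) /\
  (forall s t (l : R), 0 <= s -> 0 <= t -> 0 <= l -> l <= 1 ->
     A (l * s + (1 - l) * t) <= l * A s + (1 - l) * A t) /\
  (A t @[t --> +oo] --> +oo).

(* Luxemburg average ||g||_{A,Q} = inf {l > 0 : (1/|Q|) \int_Q A(|g|/l) <= 1}
   (= +oo if the set is empty). *)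
Definition lux {R : realType} {n : nat} (mu : {measure set (n.-tuple R) -> \bar R})
  (A : R -> R) (Q : set (n.-tuple R)) (g : n.-tuple R -> R) : \bar R :=
  ereal_inf [set (l%:E)%E | l in
    [set l : R | 0 < l /\
      (((fine (mu Q))^-1)%:E * \int[mu]_(y in Q) (A (`|g y| / l))%:E <= 1)%E]].

From HB Require Import structures.
From mathcomp Require Import all_boot all_order all_algebra.
From mathcomp Require Import all_classical all_reals all_analysis.
From mathcomp Require Import measurable_realfun ring lra.
Import Order.TTheory GRing.Theory Num.Theory.
Set Implicit Arguments.
Unset Strict Implicit.
Unset Printing Implicit Defensive.

Local Open Scope classical_set_scope.
Local Open Scope ring_scope.

(* For x in Q put a = |b(x) - b_Q| and G = |b - b_Q|.  Comparing a with G gives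
   a^(m-h) G^h <= a^m + G^m, hence a^(m-h) |f| G^h <= a^m |f| + |f| G^m pointwise.
   Convexity and monotonicity of A make the Luxemburg average obey
   ga ||w|| <= al ||u|| + be ||v|| whenever ga |w| <= al |u| + be |v| (all weights
   positive): admissible levels l1 for u and l2 for v yield the admissible level
   (al l1 + be l2) / ga for w.  Summing over Q in S gives the claim; besides the
   measurability of the cubes, b, f and A, no property of mu, S or b is used. *)

Lemma exprB_mul_le_exprD {R : realDomainType} (a g : R) (m h : nat) :
  0 <= a -> 0 <= g -> (h <= m)%N -> a ^+ (m - h) * g ^+ h <= a ^+ m + g ^+ m.
Proof.
move=> a0 g0 hm; have em : m = (m - h + h)%N by rewrite subnK.
have [ga|ag] := leP g a.
- apply: (@le_trans _ _ (a ^+ m)); last by rewrite lerDl exprn_ge0.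
  by rewrite [in leRHS]em exprD ler_wpM2l ?exprn_ge0 // lerXn2r.
- apply: (@le_trans _ _ (g ^+ m)); last by rewrite lerDr exprn_ge0.
  by rewrite [in leRHS]em exprD ler_wpM2r ?exprn_ge0 // lerXn2r // ?nnegrE ltW.
Qed.

Lemma is_cube_measurable {R : realType} {n : nat} (Q : set (n.-tuple R)) :
  is_cube Q -> measurable Q.
Proof.
move=> [a [l [_ ->]]].
have -> : [set x : n.-tuple R | forall i, tnth a i <= tnth x i < tnth a i + l]
  = \bigcap_(i in [set: 'I_n]) ((fun x => tnth x i) @^-1` `[tnth a i, tnth a i + l[).
  apply/seteqP; split=> x /= Hx i; first by move=> _ /=; rewrite in_itv; exact: Hx.
  by have := Hx i I; rewrite /= in_itv.
apply: fin_bigcap_measurable => [|i _]; first exact: finite_finset.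
by rewrite -[X in measurable X]setTI; apply: measurable_tnth => //; exact: measurable_itv.
Qed.

Lemma ge0_le_integral_comb d (T : measurableType d) (R : realType)
    (mu : {measure set T -> \bar R}) (D : set T) (F F1 F2 : T -> R) (a1 a2 : R) :
  measurable D -> measurable_fun D F -> measurable_fun D F1 -> measurable_fun D F2 ->
  (forall y, D y -> 0 <= F y) -> (forall y, D y -> 0 <= F1 y) ->
  (forall y, D y -> 0 <= F2 y) -> 0 <= a1 -> 0 <= a2 ->
  (forall y, D y -> F y <= a1 * F1 y + a2 * F2 y) ->
  (\int[mu]_(y in D) (F y)%:E
     <= a1%:E * \int[mu]_(y in D) (F1 y)%:E + a2%:E * \int[mu]_(y in D) (F2 y)%:E)%E.
Proof.
move=> mD mF mF1 mF2 F0 F10 F20 a10 a20 Fle.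
have mEF (G : T -> R) : measurable_fun D G -> measurable_fun D (fun y => (G y)%:E).
  by move=> mG; apply/measurable_EFinP.
rewrite -!ge0_integralZl_EFin //; [|exact: mEF..].
rewrite -ge0_integralD //; last 4 first.
- by move=> y Dy; rewrite mule_ge0 // lee_fin F10.
- exact/measurable_funeM/mEF.
- by move=> y Dy; rewrite mule_ge0 // lee_fin F20.
- exact/measurable_funeM/mEF.
apply: ge0_le_integral => //.
- exact: mEF.
- by apply: emeasurable_funD; apply/measurable_funeM/mEF.
Qed.

Section luxemburg.
Variables (R : realType) (n : nat) (mu : {measure set (n.-tuple R) -> \bar R}).
Variable A : R -> R.
Hypothesis A_ge0 : forall t, 0 <= t -> 0 <= A t.
Hypothesis A_nondecreasing : forall s t, 0 <= s -> s <= t -> A s <= A t.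
Hypothesis A_convex : forall s t l, 0 <= s -> 0 <= t -> 0 <= l -> l <= 1 ->
  A (l * s + (1 - l) * t) <= l * A s + (1 - l) * A t.
Hypothesis A_measurable : measurable_fun (`[0, +oo[%classic : set R) A.

Definition lux_admissible (Q : set (n.-tuple R)) (g : n.-tuple R -> R) (l : R) : Prop :=
  0 < l /\
  (((fine (mu Q))^-1)%:E * \int[mu]_(y in Q) (A (`|g y| / l))%:E <= 1)%E.

Lemma lux_ge0 Q g : (0 <= lux mu A Q g)%E.
Proof. by apply/ereal_infP => _ [l [l0 _] <-]; rewrite lee_fin ltW. Qed.

Lemma lux_le Q g l : lux_admissible Q g l -> (lux mu A Q g <= l%:E)%E.
Proof. by move=> Ql; apply: ereal_inf_lbound; exists l. Qed.

Lemma lux_fin_num Q g l : lux_admissible Q g l -> lux mu A Q g \is a fin_num.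
Proof.
by move=> /lux_le Ql; rewrite ge0_fin_numE ?lux_ge0 // (le_lt_trans Ql) ?ltry.
Qed.

Lemma le_fine_lux Q g r : lux mu A Q g \is a fin_num ->
  (forall l, lux_admissible Q g l -> r <= l) -> r <= fine (lux mu A Q g).
Proof.
move=> fin_lux rl; rewrite -lee_fin fineK //.
by apply/ereal_infP => _ [l Ql <-]; rewrite lee_fin rl.
Qed.

Lemma lux_eqy Q g : (forall l, ~ lux_admissible Q g l) -> lux mu A Q g = +oo%E.
Proof.
move=> noQ; rewrite /lux.
have -> : [set l%:E | l in lux_admissible Q g] = set0 by rewrite -subset0 => ? [l /noQ].
exact: ereal_inf0.
Qed.

Lemma measurable_A_scaled (Q : set (n.-tuple R)) (g : n.-tuple R -> R) l : measurable Q ->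
  measurable_fun Q g -> 0 < l -> measurable_fun Q (fun y => A (`|g y| / l)).
Proof.
move=> mQ mg l0; change (measurable_fun Q (A \o fun y => `|g y| / l)).
apply: (measurable_comp _ _ A_measurable).
- exact: measurable_itv.
- by move=> _ [y _ <-]; rewrite /= in_itv /= andbT divr_ge0 // ltW.
- by apply: measurable_funM => //; exact: measurableT_comp mg.
Qed.

(* The mediant is the convex combination of p / l1 and q / l2 with weights
   proportional to al * l1 and be * l2. *)
Lemma A_mediant_le (al be l1 l2 p q : R) : 0 < al -> 0 < be -> 0 < l1 -> 0 < l2 ->
  0 <= p -> 0 <= q ->
  A ((al * p + be * q) / (al * l1 + be * l2))
    <= al * l1 / (al * l1 + be * l2) * A (p / l1)
       + be * l2 / (al * l1 + be * l2) * A (q / l2).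
Proof.
move=> al0 be0 l10 l20 p0 q0.
have s0 : 0 < al * l1 + be * l2 by rewrite addr_gt0 ?mulr_gt0.
set s := al * l1 + be * l2 in s0 *; set t := al * l1 / s.
have -> : be * l2 / s = 1 - t by rewrite /t /s; field; rewrite gt_eqF.
have -> : (al * p + be * q) / s = t * (p / l1) + (1 - t) * (q / l2).
  by rewrite /t /s; field; rewrite !gt_eqF.
have t_ge0 : 0 <= t by rewrite divr_ge0 ?mulr_ge0 ?ltW.
have t_le1 : t <= 1 by rewrite ler_pdivrMr // mul1r lerDl mulr_ge0 ?ltW.
by apply: A_convex; rewrite // divr_ge0 // ltW.
Qed.

Lemma lux_admissible_comb (Q : set (n.-tuple R)) (u v w : n.-tuple R -> R)
    (al be ga l1 l2 : R) :
  measurable Q -> measurable_fun Q u -> measurable_fun Q v -> measurable_fun Q w ->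
  0 < al -> 0 < be -> 0 < ga ->
  (forall y, Q y -> ga * `|w y| <= al * `|u y| + be * `|v y|) ->
  lux_admissible Q u l1 -> lux_admissible Q v l2 ->
  lux_admissible Q w ((al * l1 + be * l2) / ga).
Proof.
move=> mQ mU mV mW al0 be0 ga0 w_le [l10 Qu] [l20 Qv].
have s0 : 0 < al * l1 + be * l2 by rewrite addr_gt0 ?mulr_gt0.
have sga0 : 0 < (al * l1 + be * l2) / ga by rewrite divr_gt0.
split=> //; set s := al * l1 + be * l2 in s0 sga0 *.
have c0 : 0 <= (fine (mu Q))^-1 by rewrite invr_ge0 fine_ge0 ?measure_ge0.
have Ag0 (g : n.-tuple R -> R) l y : 0 < l -> 0 <= A (`|g y| / l).
  by move=> l0; apply: A_ge0; rewrite divr_ge0 // ltW.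
have t10 : 0 <= al * l1 / s by rewrite divr_ge0 ?mulr_ge0 ?ltW.
have t20 : 0 <= be * l2 / s by rewrite divr_ge0 ?mulr_ge0 ?ltW.
have A_w_le y : Q y -> A (`|w y| / (s / ga))
    <= al * l1 / s * A (`|u y| / l1) + be * l2 / s * A (`|v y| / l2).
  move=> Qy; apply: le_trans _ (A_mediant_le al0 be0 l10 l20
    (normr_ge0 (u y)) (normr_ge0 (v y))).
  have -> : `|w y| / (s / ga) = ga * `|w y| / s by field; rewrite !gt_eqF.
  apply: A_nondecreasing; first by rewrite divr_ge0 ?mulr_ge0 // ltW.
  by rewrite ler_pM2r ?invr_gt0 // w_le.
have := ge0_le_integral_comb mu mQ (measurable_A_scaled mQ mW sga0)
  (measurable_A_scaled mQ mU l10) (measurable_A_scaled mQ mV l20)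
  (fun y _ => Ag0 w _ y sga0) (fun y _ => Ag0 u _ y l10) (fun y _ => Ag0 v _ y l20)
  t10 t20 A_w_le.
move=> /(lee_wpmul2l (c0 : (0 <= _%:E)%E)) /le_trans; apply.
rewrite ge0_muleDr ?mule_ge0 ?integral_ge0 //; [|by move=> y _; exact: Ag0..].
rewrite muleCA [X in (_ + X)%E]muleCA.
apply: le_trans (leeD (lee_wpmul2l _ Qu) (lee_wpmul2l _ Qv)) _; rewrite ?lee_fin //.
by rewrite !mulr1 -mulrDl divff ?gt_eqF.
Qed.

Lemma lux_comb (Q : set (n.-tuple R)) (u v w : n.-tuple R -> R) (al be ga : R) :
  measurable Q -> measurable_fun Q u -> measurable_fun Q v -> measurable_fun Q w ->
  0 < al -> 0 < be -> 0 < ga ->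
  (forall y, Q y -> ga * `|w y| <= al * `|u y| + be * `|v y|) ->
  (ga%:E * lux mu A Q w <= al%:E * lux mu A Q u + be%:E * lux mu A Q v)%E.
Proof.
move=> mQ mU mV mW al0 be0 ga0 w_le.
have comb := lux_admissible_comb mQ mU mV mW al0 be0 ga0 w_le.
have lux_scaled_ge0 k g : 0 < k -> (0 <= k%:E * lux mu A Q g)%E.
  by move=> k0; rewrite mule_ge0 ?lux_ge0 // lee_fin ltW.
have [[l1 Qu]|noQu] := pselect (exists l, lux_admissible Q u l); last first.
  rewrite [lux _ _ _ u]lux_eqy => [|l Ql]; last exact: noQu (ex_intro _ l Ql).
  rewrite gt0_muley ?lte_fin //.
  exact: le_trans (leey _) (leeDl _ (lux_scaled_ge0 _ _ be0)).
have [[l2 Qv]|noQv] := pselect (exists l, lux_admissible Q v l); last first.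
  rewrite [lux _ _ _ v]lux_eqy => [|l Ql]; last exact: noQv (ex_intro _ l Ql).
  rewrite gt0_muley ?lte_fin //.
  exact: le_trans (leey _) (leeDr _ (lux_scaled_ge0 _ _ al0)).
have fu := lux_fin_num Qu; have fv := lux_fin_num Qv.
have fw := lux_fin_num (comb _ _ Qu Qv).
rewrite -(fineK fu) -(fineK fv) -(fineK fw) -!EFinM -EFinD lee_fin.
set U := fine (lux mu A Q u); set V := fine (lux mu A Q v).
set W := fine (lux mu A Q w).
(* Take the infimum over l1, then over l2. *)
have W_le l1' l2' : lux_admissible Q u l1' -> lux_admissible Q v l2' ->
    ga * W <= al * l1' + be * l2'.
  move=> Qu' Qv'; rewrite mulrC -ler_pdivlMr // -lee_fin fineK //.
  exact: lux_le (comb _ _ Qu' Qv').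
have U_ge l2' : lux_admissible Q v l2' -> (ga * W - be * l2') / al <= U.
  move=> Qv'; apply: le_fine_lux fu _ => l1' Qu'.
  by rewrite ler_pdivrMr //; have := W_le _ _ Qu' Qv'; lra.
have V_ge : (ga * W - al * U) / be <= V.
  apply: le_fine_lux fv _ => l2' Qv'.
  by have := U_ge _ Qv'; rewrite !ler_pdivrMr //; lra.
by move: V_ge; rewrite ler_pdivrMr //; lra.
Qed.

Lemma lux_mixed_power_le (Q : set (n.-tuple R)) (f b : n.-tuple R -> R) (c a : R)
    (m h : nat) :
  measurable Q -> measurable_fun Q f -> measurable_fun Q b -> 0 <= a -> (h <= m)%N ->
  ((a ^+ (m - h))%:E * lux mu A Q (fun y => (f y * `|b y - c| ^+ h)%R)
    <= (a ^+ m)%:E * lux mu A Q f + lux mu A Q (fun y => (f y * `|b y - c| ^+ m)%R))%E.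
Proof.
move=> mQ mf mb a_ge0 hm.
have mg k : measurable_fun Q (fun y => f y * `|b y - c| ^+ k).
  apply: measurable_funM => //; apply/measurable_funX/measurableT_comp => //.
  exact: measurable_funB.
have [->|a_neq0] := eqVneq a 0.
  rewrite expr0n; case: eqP => [/eqP|_].
    rewrite subn_eq0 => mh; have -> : h = m by apply/eqP; rewrite eqn_leq hm.
    by rewrite mul1e lee_paddl // mule_ge0 ?lux_ge0.
  by rewrite mul0e adde_ge0 ?mule_ge0 ?lux_ge0 // lee_fin exprn_ge0.
have a_gt0 : 0 < a by rewrite lt_def a_neq0.
rewrite -[X in (_ <= _ + X)%E]mul1e.
apply: lux_comb; rewrite ?exprn_gt0 // => y _.
rewrite !normrM !normrX !normr_id mul1r mulrCA [a ^+ m * _]mulrC -mulrDr.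
by rewrite ler_wpM2l //; apply: exprB_mul_le_exprD.
Qed.

End luxemburg.

Theorem lemma3p8 (R : realType) (n : nat)
  (mu : {measure set (n.-tuple R) -> \bar R}) (hmu : lebesgue_on_boxes mu)
  (eta : R) (S : set (set (n.-tuple R))) (hS : sparse mu eta S)
  (m h : nat) (hm : (0 < m)%N) (hh : (h <= m)%N)
  (A : R -> R) (hA : young A)
  (b f : n.-tuple R -> R) (hb : Lloc mu m b) (hf : measurable_fun setT f)
  (x : n.-tuple R) :
  (\esum_(Q in S)
      ((`|b x - avg mu Q b| ^+ (m - h))%R%:E
       * lux mu A Q (fun y => (f y * `|b y - avg mu Q b| ^+ h)%R)
       * (\1_Q x)%:E)
   <= \esum_(Q in S)
        ((`|b x - avg mu Q b| ^+ m)%R%:E * lux mu A Q f * (\1_Q x)%:E)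
    + \esum_(Q in S)
        (lux mu A Q (fun y => (f y * `|b y - avg mu Q b| ^+ m)%R) * (\1_Q x)%:E))%E.
Proof.
have [_ [S_cube _]] := hS; have [mb _] := hb.
have [_ [A_ge0 [A_cont [A_nondecreasing [A_convex _]]]]] := hA.
have A_measurable := subspace_continuous_measurable_fun (measurable_itv _) A_cont.
rewrite -esumD => [|Q _|Q _]; last 2 first.
- by rewrite !mule_ge0 ?lee_fin ?exprn_ge0 ?lux_ge0.
- by rewrite mule_ge0 ?lux_ge0.
apply: le_esum => Q SQ; rewrite indicE.
have [xQ|_] := boolP (x \in Q); last by rewrite !mule0 adde0.
rewrite !mule1.
apply: (lux_mixed_power_le mu A_ge0 A_nondecreasing A_convex A_measurable) => //.
- exact: is_cube_measurable (S_cube Q SQ).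
- exact: measurable_funTS.
- exact: measurable_funTS.
Qed.
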